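(* Let $n\ge1$, $k\ge1$, $\mathcal{D}=\{0,\ldots,n\}$. Every infinite sequence in $\mathcal{D}^{\mathbb{N}}$ obtained as an infinite concatenation $\mathbf{W}_{i_1}\mathbf{W}_{i_2}\mathbf{W}_{i_3}\cdots$ with $i_1,i_2,\ldots\in\{0,\ldots,n\}$ is $k$-simply normal.
   Context: Let $\mathbf{w}_0,\ldots,\mathbf{w}_{(n+1)^k-1}$ be the elements of $\mathcal{D}^k$ in strictly increasing lexicographic order. For $i=0,\ldots,n$ define $\mathbf{W}_i=\mathbf{w}_i\mathbf{w}_{i+1}\cdots\mathbf{w}_{(n+1)^k-1}\mathbf{w}_0\cdots\mathbf{w}_{i-1}$. For $\mathbf{b}\in\mathcal{D}^k$ and $\mathbf{a}\in\mathcal{D}^{\mathbb{N}}$ let $\mathrm{freq}_{\mathbf{b}}(\mathbf{a})=\lim_{m\to\infty}\frac{1}{m}\#\{1\le j\le m: a_j\cdots a_{j+k-1}=\mathbf{b}\}$ when the limit exists; $\mathbf{a}$ is $k$-simply normal if $\mathrm{freq}_{\mathbf{b}}(\mathbf{a})=(n+1)^{-k}$ for all $\mathbf{b}\in\mathcal{D}^k$. *)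

From Stdlib Require Import Reals.
From mathcomp Require Import all_boot.
Set Implicit Arguments. Unset Strict Implicit. Unset Printing Implicit Defensive.

(* Digits D = {0,...,n} are represented by naturals <= n; words by seq nat. *)

Fixpoint lex_le (s t : seq nat) : bool :=
  match s, t with
  | [::], _ => true
  | _ :: _, [::] => false
  | x :: s', y :: t' => (x < y) || ((x == y) && lex_le s' t')
  end.

Fixpoint all_words (n k : nat) : seq (seq nat) :=
  match k with
  | 0 => [:: [::]]
  | k'.+1 => [seq x :: w | x <- iota 0 n.+1, w <- all_words n k']
  end.

Definition lex_words (n k : nat) : seq (seq nat) := sort lex_le (all_words n k).

Definition bigW (n k i : nat) : seq nat := flatten (rot i (lex_words n k)).

(* The infinite concatenation W_{i_1} W_{i_2} ... (all blocks have the same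
   length k * (n+1)^k); positions indexed from 0. *)
Definition concatW (n k : nat) (idx : nat -> nat) (m : nat) : nat :=
  let L := k * (n.+1) ^ k in nth 0 (bigW n k (idx (m %/ L))) (m %% L).

Definition occ (a : nat -> nat) (b : seq nat) (m : nat) : nat :=
  count (fun j => [seq a (j + t) | t <- iota 0 (size b)] == b) (iota 0 m).

Definition has_freq (a : nat -> nat) (b : seq nat) (f : R) : Prop :=
  Un_cv (fun m => Rdiv (INR (occ a b m)) (INR m)) f.

Definition simply_normal (n k : nat) (a : nat -> nat) : Prop :=
  forall b : seq nat, size b = k -> all (fun x => x <= n) b ->
    has_freq a b (Rinv (INR (n.+1 ^ k))).

From Stdlib Require Import Reals Lra.
From mathcomp Require Import all_boot zify.
Set Implicit Arguments. Unset Strict Implicit. Unset Printing Implicit Defensive.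

(* With N = (n+1)^k, the word w_j is the k-digit base-(n+1) expansion of j, so every W_i
   is a factor of length k N of the periodic sequence w_0 w_1 ... w_{N-1} w_0 w_1 ....
   A length-k window of that sequence starting at offset r inside w_j reads the last
   k - r digits of j followed by the first r digits of j + 1 (mod N); as j runs over a
   period, each word b is read exactly once, so b occurs k times per period.  Since
   i <= n, w_i starts with k - 1 zeros, so a window straddling two consecutive blocks
   of W_{i_1} W_{i_2} ... reads the same letters as in the periodic sequence.  Hence b
   occurs exactly k times per block of length k N, and its frequency is 1 / N. *)

Section Digits.

Variable B : nat.

Fixpoint digits (m x : nat) : seq nat :=
  if m is m'.+1 then (x %/ B ^ m' %% B) :: digits m' x else [::].

Lemma size_digits m x : size (digits m x) = m.
Proof. by elim: m => //= m ->. Qed.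

Lemma digits0 m : digits m 0 = nseq m 0.
Proof. by elim: m => //= m ->; rewrite div0n mod0n. Qed.

Lemma digitsD a b x : digits (a + b) x = digits a (x %/ B ^ b) ++ digits b x.
Proof. by elim: a => //= a ->; rewrite -divnMA -expnD addnC. Qed.

Hypothesis B_gt0 : 0 < B.

Lemma digits_mod m x : digits m (x %% B ^ m) = digits m x.
Proof.
elim: m x => //= m IH x; congr (_ :: _).
  by rewrite expnS -modn_divl modn_mod.
by rewrite -IH -[in RHS]IH modn_dvdm // expnS dvdn_mull.
Qed.

Lemma digitsDexp m x : digits m (x + B ^ m) = digits m x.
Proof. by rewrite -digits_mod modnDr digits_mod. Qed.

Lemma modn_expS m x : x %% B ^ m.+1 = x %/ B ^ m %% B * B ^ m + x %% B ^ m.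
Proof.
have low_lt : x %% B ^ m < B ^ m by rewrite ltn_mod expn_gt0 B_gt0.
have dig_lt : x %/ B ^ m %% B < B by rewrite ltn_mod.
rewrite {1}(divn_eq x (B ^ m)) {1}(divn_eq (x %/ B ^ m) B) expnS mulnDl.
rewrite -mulnA [B * _]mulnC -addnA modnMDl modn_small //; nia.
Qed.

Lemma digits_inj m x y : digits m x = digits m y -> x %% B ^ m = y %% B ^ m.
Proof.
elim: m x y => [|m IH] x y /=; first by rewrite !modn1.
by case=> eq_dig /IH eq_low; rewrite !modn_expS eq_dig eq_low.
Qed.

Lemma eq_digits m x y : y < B ^ m -> (digits m x == digits m y) = (x %% B ^ m == y).
Proof.
move=> y_lt; apply/eqP/eqP => [/digits_inj|<-]; last by rewrite digits_mod.
by rewrite (modn_small y_lt).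
Qed.

Lemma digits_onto m s : size s = m -> all (fun d => d < B) s ->
  exists2 y, y < B ^ m & digits m y = s.
Proof.
elim: m s => [|m IH] [|d s] //=; first by exists 0.
case=> size_s /andP [d_lt s_lt]; have [y y_lt <-] := IH s size_s s_lt.
have pow_gt0 : 0 < B ^ m by rewrite expn_gt0 B_gt0.
exists (d * B ^ m + y); first by rewrite expnS; nia.
rewrite divnMDl // divn_small // addn0 modn_small //.
by rewrite -digits_mod modnMDl modn_small // digits_mod.
Qed.

Lemma lex_le_digits m x y : x <= y -> y < B ^ m -> lex_le (digits m x) (digits m y).
Proof.
elim: m x y => // m IH x y le_xy y_lt /=.
have pow_gt0 : 0 < B ^ m by rewrite expn_gt0 B_gt0.
have lead_lt z : z < B ^ m.+1 -> z %/ B ^ m < B by rewrite ltn_divLR // -expnS.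
rewrite !modn_small ?lead_lt //; last exact: leq_ltn_trans y_lt.
have := leq_div2r (B ^ m) le_xy; rewrite leq_eqVlt => /orP [/eqP eq_lead|->] //.
rewrite eq_lead eqxx ltnn /= -digits_mod -[digits m y]digits_mod.
apply: IH; last by rewrite ltn_mod.
by move: le_xy; rewrite {1}(divn_eq x (B ^ m)) {1}(divn_eq y (B ^ m)) eq_lead leq_add2l.
Qed.

End Digits.

Lemma iota_mul a M :
  iota 0 (a * M) = flatten [seq iota (x * M) M | x <- iota 0 a].
Proof.
elim: a => // a IH.
by rewrite -addn1 iotaD map_cat flatten_cat /= cats0 -IH mulnDl mul1n iotaD.
Qed.

Lemma all_words_digits n k :
  all_words n k = map (digits n.+1 k) (iota 0 (n.+1 ^ k)).
Proof.
elim: k => // k IH.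
have -> : all_words n k.+1 = [seq x :: w | x <- iota 0 n.+1, w <- all_words n k] by [].
rewrite IH expnS iota_mul map_flatten -map_comp.
congr flatten; apply/eq_in_map => x; rewrite mem_iota /= => x_lt.
rewrite -[x * _]addn0 iotaDl -!map_comp; apply/eq_in_map => y; rewrite mem_iota /= => y_lt.
rewrite divnMDl ?expn_gt0 // divn_small // addn0 modn_small //.
by rewrite -[in RHS]digits_mod // modnMDl modn_small.
Qed.

Lemma lex_le_trans : transitive lex_le.
Proof.
move=> t s u; elim: s t u => [|x s IH] [|y t] [|z u] //=.
case/orP=> [lt_yx|/andP [/eqP <- le_ts]] /orP [lt_xz|/andP [/eqP <- le_su]].
- by rewrite (ltn_trans lt_yx lt_xz).
- by rewrite lt_yx.
- by rewrite lt_xz.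
- by rewrite eqxx (IH _ _ le_ts le_su) orbT.
Qed.

Lemma lex_words_digits n k :
  lex_words n k = map (digits n.+1 k) (iota 0 (n.+1 ^ k)).
Proof.
rewrite /lex_words all_words_digits (sorted_sort lex_le_trans) //.
apply: (homo_sorted_in (P := fun y => y < n.+1 ^ k) (e := ltn)).
- by move=> x y _ y_lt /ltnW le_xy; exact: lex_le_digits.
- by apply/allP => x; rewrite mem_iota.
- exact: iota_ltn_sorted.
Qed.

Lemma nth_flatten_uniform (T : Type) (x0 : T) (ss : seq (seq T)) k j r :
  all (fun s => size s == k) ss -> r < k ->
  nth x0 (flatten ss) (j * k + r) = nth x0 (nth [::] ss j) r.
Proof.
elim: ss j => [|s ss IH] j; first by rewrite !nth_nil.
case/andP=> /eqP size_s size_ss r_lt.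
case: j => [|j] /=; first by rewrite nth_cat size_s r_lt.
by rewrite nth_cat size_s mulSn -addnA ltnNge leq_addr /= addKn IH.
Qed.

Lemma nth_rot_iota N i j : i <= N -> j < N -> nth 0 (rot i (iota 0 N)) j = (i + j) %% N.
Proof.
move=> i_le j_lt; rewrite /rot nth_cat size_drop size_iota.
case: ltnP => j_pos.
  by rewrite nth_drop nth_iota ?modn_small //; lia.
rewrite nth_take ?nth_iota; try lia.
by rewrite (_ : i + j = i + j - N + N) ?modnDr ?modn_small //; lia.
Qed.

Lemma count_iota_eq1 (P : pred nat) N j0 : j0 < N -> P j0 ->
  (forall j, j < N -> P j -> j = j0) -> count P (iota 0 N) = 1.
Proof.
move=> j0_lt P_j0 P_uniq; rewrite (@eq_in_count _ _ (pred1 j0)).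
  by rewrite count_uniq_mem ?iota_uniq // mem_iota j0_lt.
by move=> j; rewrite mem_iota /= => j_lt; apply/idP/eqP => [/(P_uniq _ j_lt)|->].
Qed.

Lemma count_iota_mod_divS P Q y1 y2 : 0 < P -> 0 < Q -> y1 < P -> y2 < Q ->
  count (fun j => (j %% P == y1) && (j.+1 %/ P %% Q == y2)) (iota 0 (Q * P)) = 1.
Proof.
move=> P_gt0 Q_gt0 y1_lt y2_lt.
set c := y1.+1 %/ P.
have c_le1 : c <= 1 by have := leq_div2r P y1_lt; rewrite divnn P_gt0.
have divS j : j %% P = y1 -> j.+1 %/ P = j %/ P + c.
  by move=> j_mod; rewrite {1}(divn_eq j P) j_mod -addnS divnMDl.
set w := (y2 + Q - c) %% Q.
have w_lt : w < Q by rewrite ltn_mod.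
have wc_mod : (w + c) %% Q = y2.
  by rewrite modnDml subnK ?modnDr ?modn_small //; lia.
apply: (count_iota_eq1 (j0 := w * P + y1)); first by nia.
  by rewrite modnMDl modn_small // eqxx -addnS divnMDl // -/c wc_mod /=.
move=> j j_lt /andP [/eqP j_mod /eqP j_div].
have jP_lt : j %/ P < Q by rewrite ltn_divLR.
rewrite (divn_eq j P) j_mod; congr (_ * _ + _).
rewrite -(modn_small jP_lt) -(modn_small w_lt); apply/eqP.
by rewrite -(eqn_modDr c) -divS // j_div wc_mod.
Qed.

Lemma count_iota_mul (P : pred nat) N k : count P (iota 0 (N * k)) =
  \sum_(r <- iota 0 k) count (fun j => P (j * k + r)) (iota 0 N).
Proof.
elim: N => [|N IH]; first by rewrite big1.
have last_block : count P (iota (N * k) k) = \sum_(r <- iota 0 k) P (N * k + r).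
  by rewrite -{1}[N * k]addn0 iotaDl count_map -sumn_count sumnE big_map.
rewrite mulSn addnC iotaD count_cat IH last_block -big_split.
by apply: eq_bigr => r _; rewrite -[N.+1]addn1 iotaD count_cat /= add0n addn0.
Qed.

Lemma count_iota_shift_periodic (P : pred nat) L c : (forall p, P (p + L) = P p) ->
  count (fun s => P (s + c)) (iota 0 L) = count P (iota 0 L).
Proof.
move=> P_periodic; elim: c => [|c IH]; first by apply: eq_count => s; rewrite addn0.
set Q := fun s => P (s + c).
have ends : P c + count Q (iota 1 L) = count Q (iota 0 L) + P (L + c).
  by rewrite -[LHS]/(count Q (iota 0 L.+1)) -addn1 iotaD count_cat /= addn0.
rewrite (addnC L) P_periodic IH addnC in ends.
rewrite -(addIn ends) -[1]/(1 + 0) iotaDl count_map.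
by apply: eq_count => s; rewrite /preim /Q /= add1n addSnnS.
Qed.

Local Notation window a k p := [seq a (p + t) | t <- iota 0 k].

Section LexStream.

Variables n k : nat.
Hypothesis k_gt0 : 0 < k.

Local Notation N := (n.+1 ^ k).
Local Notation L := (k * N).

Let N_gt0 : 0 < N. Proof. by rewrite expn_gt0. Qed.

(* w_0 w_1 ... w_{N-1} w_0 w_1 ..., whose factor of length L at position i k is W_i. *)
Definition lex_stream (p : nat) : nat := nth 0 (digits n.+1 k (p %/ k)) (p %% k).

Lemma lex_stream_block j e : e < k -> lex_stream (j * k + e) = nth 0 (digits n.+1 k j) e.
Proof.
by move=> e_lt; rewrite /lex_stream modnMDl modn_small // divnMDl // divn_small // addn0.
Qed.

Lemma lex_stream_periodic p : lex_stream (p + L) = lex_stream p.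
Proof.
by rewrite /lex_stream [L]mulnC addnC modnMDl divnMDl // addnC digitsDexp.
Qed.

Lemma window_lex_stream_periodic p : window lex_stream k (p + L) = window lex_stream k p.
Proof. by apply/eq_in_map => t _; rewrite addnAC lex_stream_periodic. Qed.

Lemma lex_stream_lead_zero i e : i <= n -> e.+1 < k -> lex_stream (i * k + e) = 0.
Proof.
move=> i_le e_lt; rewrite lex_stream_block; last by lia.
rewrite -(subnK k_gt0) digitsD expn1 divn_small // digits0 nth_cat size_nseq.
by rewrite ifT ?nth_nseq ?if_same //; lia.
Qed.

Lemma window_lex_stream j r : r < k -> window lex_stream k (j * k + r) =
  digits n.+1 (k - r) j ++ digits n.+1 r (j.+1 %/ n.+1 ^ (k - r)).
Proof.
move=> r_lt.
have digits_split x :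
    digits n.+1 k x = digits n.+1 r (x %/ n.+1 ^ (k - r)) ++ digits n.+1 (k - r) x.
  by rewrite -digitsD subnKC // ltnW.
apply: (@eq_from_nth _ 0); first by rewrite size_map size_iota size_cat !size_digits subnK // ltnW.
rewrite size_map size_iota => t t_lt.
rewrite (nth_map 0) ?size_iota // nth_iota // add0n nth_cat size_digits.
case: ltnP => t_pos.
  rewrite -addnA lex_stream_block; last by lia.
  by rewrite digits_split nth_cat size_digits ltnNge leq_addr addKn.
rewrite (_ : j * k + r + t = j.+1 * k + (t - (k - r))); last by rewrite mulSn; lia.
rewrite lex_stream_block; last by lia.
by rewrite digits_split nth_cat size_digits ifT //; lia.
Qed.

Variable b : seq nat.
Hypotheses (size_b : size b = k) (b_digits : all (fun x => x <= n) b).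

Lemma count_window_lex_stream_offset r : r < k ->
  count (fun j => window lex_stream k (j * k + r) == b) (iota 0 N) = 1.
Proof.
move=> r_lt.
have /andP [high_lt low_lt] :
    all (fun x => x < n.+1) (take (k - r) b) && all (fun x => x < n.+1) (drop (k - r) b).
  by rewrite -all_cat cat_take_drop.
have size_high : size (take (k - r) b) = k - r by rewrite size_takel // size_b leq_subr.
have size_low : size (drop (k - r) b) = r by rewrite size_drop size_b subKn // ltnW.
have [y1 y1_lt dig_y1] := digits_onto (ltn0Sn n) size_high high_lt.
have [y2 y2_lt dig_y2] := digits_onto (ltn0Sn n) size_low low_lt.
rewrite -(cat_take_drop (k - r) b) -dig_y1 -dig_y2.
under eq_count => j do rewrite window_lex_stream // eqseq_cat ?size_digits // !eq_digits //.
have -> : N = n.+1 ^ r * n.+1 ^ (k - r) by rewrite -expnD subnKC // ltnW.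
by apply: count_iota_mod_divS; rewrite ?expn_gt0.
Qed.

Lemma count_window_lex_stream :
  count (fun p => window lex_stream k p == b) (iota 0 L) = k.
Proof.
rewrite mulnC count_iota_mul (eq_big_seq (fun _ => 1)) ?sum1_size ?size_iota //.
by move=> r; rewrite mem_iota => r_lt; exact: count_window_lex_stream_offset.
Qed.

Variable idx : nat -> nat.
Hypothesis idx_le : forall j, idx j <= n.

Let L_gt0 : 0 < L. Proof. by rewrite muln_gt0 k_gt0 N_gt0. Qed.

Lemma concatW_lex_stream m : concatW n k idx m = lex_stream (m %% L + idx (m %/ L) * k).
Proof.
rewrite /concatW /bigW lex_words_digits -map_rot.
set i := idx _; set q := m %% L.
have q_lt : q < L by rewrite ltn_mod.
have i_le : i <= N.
  by have := leq_pexp2l (ltn0Sn n) k_gt0; rewrite expn1; have := idx_le (m %/ L); lia.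
have j_lt : q %/ k < N by rewrite ltn_divLR // mulnC.
rewrite {1}(divn_eq q k) nth_flatten_uniform ?ltn_mod //; last first.
  by apply/allP => s /mapP [x _ ->]; rewrite size_digits.
rewrite (nth_map 0) ?size_rot ?size_iota // nth_rot_iota // digits_mod //.
rewrite -lex_stream_block ?ltn_mod //; congr lex_stream.
by rewrite [in RHS](divn_eq q k); lia.
Qed.

Lemma window_concatW q s : s < L ->
  window (concatW n k idx) k (q * L + s) = window lex_stream k (s + idx q * k).
Proof.
move=> s_lt; apply/eq_in_map => t; rewrite mem_iota add0n => t_lt.
have k_le : k <= L by rewrite leq_pmulr.
rewrite concatW_lex_stream.
case: (ltnP (s + t) L) => st_lt.
  by rewrite -addnA modnMDl modn_small // divnMDl // divn_small // addn0 addnAC.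
(* Across a block boundary the window only reads the k - 1 leading zeros of some w_i with i <= n. *)
have -> : q * L + s + t = q.+1 * L + (s + t - L) by rewrite mulSn; lia.
rewrite modnMDl modn_small; last by lia.
rewrite divnMDl // divn_small ?addn0; last by lia.
rewrite addnC lex_stream_lead_zero //; last by lia.
have -> : s + idx q * k + t = idx q * k + (s + t - L) + L by lia.
by rewrite lex_stream_periodic lex_stream_lead_zero //; lia.
Qed.

Lemma occ_concatW_mul q : occ (concatW n k idx) b (q * L) = q * k.
Proof.
rewrite /occ size_b; elim: q => [|q IH]; first by rewrite mul0n.
rewrite mulSnr iotaD count_cat IH mulSnr add0n; congr (_ + _).
rewrite -{1}(addn0 (q * L)) iotaDl count_map.
rewrite (eq_in_count (a2 := fun s => window lex_stream k (s + idx q * k) == b)); last first.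
  by move=> s; rewrite mem_iota => /andP [_ s_lt]; rewrite /= window_concatW.
rewrite (count_iota_shift_periodic (P := fun p => window lex_stream k p == b)).
  exact: count_window_lex_stream.
by move=> p; rewrite /= window_lex_stream_periodic.
Qed.

Lemma occ_concatW_bounds m :
  m %/ L * k <= occ (concatW n k idx) b m <= m %/ L * k + m %% L.
Proof.
rewrite -occ_concatW_mul /occ {2 3}(divn_eq m L) iotaD count_cat leq_addr /= leq_add2l.
by rewrite (leq_trans (count_size _ _)) ?size_iota.
Qed.

End LexStream.

Lemma block_count_defect L c m x : 0 < L -> m %/ L * c <= x <= m %/ L * c + m %% L ->
  x * L <= c * m + (c + L) * L /\ c * m <= x * L + (c + L) * L.
Proof.
move=> L_gt0 /andP [x_ge x_le].
have r_lt : m %% L < L by rewrite ltn_mod.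
have m_eq := divn_eq m L; split; nia.
Qed.

Open Scope R_scope.

Lemma Un_cv_ratio_bounded_defect (f : nat -> nat) (L c K : nat) : (0 < L)%N ->
  (forall m, f m * L <= c * m + K /\ c * m <= f m * L + K)%N ->
  Un_cv (fun m => INR (f m) / INR m) (INR c / INR L).
Proof.
move=> L_gt0 defect eps eps_gt0.
have [M M_large] := INR_archimed eps (INR K) eps_gt0.
exists M.+1 => m /leP m_gt; rewrite /R_dist.
have [hi lo] := defect m.
have Rhi : INR (f m) * INR L <= INR c * INR m + INR K.
  by rewrite -!mult_INR -plus_INR; apply/le_INR/leP.
have Rlo : INR c * INR m <= INR (f m) * INR L + INR K.
  by rewrite -!mult_INR -plus_INR; apply/le_INR/leP.
have RL_ge1 : 1 <= INR L by apply/(le_INR 1)/leP.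
have Rm_gt : INR M + 1 <= INR m by rewrite -S_INR; apply/le_INR/leP.
have M_ge0 := pos_INR M.
have K_lt : INR K < eps * INR m by nra.
have K_ge0 := pos_INR K.
set D := INR m * INR L; have D_gt0 : 0 < D by rewrite /D; nra.
have KD : INR K < eps * D by rewrite /D; nra.
rewrite (_ : _ - _ = (INR (f m) * INR L - INR c * INR m) / D); last first.
  by rewrite /D; field; split; lra.
by apply: Rabs_def1; apply: (Rmult_lt_reg_r D) => //; rewrite /Rdiv Rmult_assoc Rinv_l; lra.
Qed.

Close Scope R_scope.

Theorem proposition2p2 (n k : nat) (idx : nat -> nat) :
  1 <= n -> 1 <= k -> (forall j, idx j <= n) ->
  simply_normal n k (concatW n k idx).
Proof.
move=> _ k_gt0 idx_le b size_b b_digits.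
set L := k * n.+1 ^ k; have L_gt0 : 0 < L by rewrite muln_gt0 k_gt0 expn_gt0.
have -> : Rinv (INR (n.+1 ^ k)) = Rdiv (INR k) (INR L).
  rewrite mult_INR; field.
  by split; apply: not_0_INR; [apply/eqP; rewrite expn_eq0 | lia].
apply: (@Un_cv_ratio_bounded_defect (occ (concatW n k idx) b) L k ((k + L) * L)) => // m.
by apply: block_count_defect => //; exact: occ_concatW_bounds.
Qed.
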